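(* The cut rule — from $\Delta' \vdash A$ and $\Delta(A) \vdash B$ infer $\Delta(\Delta') \vdash B$, for an arbitrary bunched context $\Delta(-)$ — is admissible in the cut-free fragment $\vdash_{\mathsf{cf}}$ of BI+$L$. That is, if $\Delta' \vdash_{\mathsf{cf}} A$ and $\Delta(A) \vdash_{\mathsf{cf}} B$ are derivable in BI+$L$ without cut, then $\Delta(\Delta') \vdash_{\mathsf{cf}} B$ is derivable in BI+$L$ without cut.
   Context: BI is the logic of bunched implications, with formulas built from atoms, $\top,\bot,\wedge,\vee,\to$ and the multiplicatives $\mathsf{emp}$, $\ast$ (separating conjunction), $-\!\ast$ (magic wand). Its sequent calculus operates on sequents $\Delta \vdash \varphi$ where $\Delta$ is a bunch: a tree whose binary nodes are labelled with ''$,$'' (multiplicative, corresponding to $\ast$) or ''$;$'' (additive, corresponding to $\wedge$) and whose leaves are formulas or the empty bunches $\varnothing_m$, $\varnothing_a$, taken modulo commutative monoid laws for $('','',\varnothing_m)$ and $('';'',\varnothing_a)$. A bunched context $\Delta(-)$ is a bunch with a hole. The calculus has the axiom $a \vdash a$ for atoms, weakening and contraction for ''$;$'' inside arbitrary bunched contexts, the usual left/right rules for all connectives (left rules applying deep inside bunched contexts), and the cut rule. A bunched term is a bunch built from ''$,$'', ''$;$'' and variables $x_1,\dots,x_n$; it is linear if each variable occurs at most once; $T[\Delta_1,\dots,\Delta_n]$ denotes substitution of $\Delta_j$ for $x_j$. A simple structural rule is a tuple $(\{T_1,\dots,T_m\},T)$ with $T$ linear, representing the rule: from $\Pi(T_i[\vec\Delta])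 \vdash \varphi$ for all $1\le i\le m$, infer $\Pi(T[\vec\Delta]) \vdash \varphi$, for any bunched context $\Pi$ and bunches $\vec\Delta$ (e.g. weakening for ''$,$'' is $(\{x_1\}, x_1 , x_2)$). Fix a finite collection $L$ of simple structural rules; BI+$L$ is the BI sequent calculus extended with the rules in $L$, and $\vdash_{\mathsf{cf}}$ denotes provability in BI+$L$ without the cut rule. *)

From Stdlib Require Import List.
Import ListNotations.

Inductive formula : Type :=
| FAtom : nat -> formula
| FTop : formula
| FBot : formula
| FAnd : formula -> formula -> formula
| FOr : formula -> formula -> formula
| FImp : formula -> formula -> formula
| FEmp : formula
| FStar : formula -> formula -> formula
| FWand : formula -> formula -> formula.

(* Bunches: trees with "," (BComma) and ";" (BSemi) nodes, leaves formulas
   or the empty bunches (BEmpM = multiplicative unit, BEmpA = additive unit). *)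
Inductive bunch : Type :=
| BForm : formula -> bunch
| BEmpM : bunch
| BEmpA : bunch
| BComma : bunch -> bunch -> bunch
| BSemi : bunch -> bunch -> bunch.

Inductive bequiv : bunch -> bunch -> Prop :=
| beq_refl G : bequiv G G
| beq_sym G H : bequiv G H -> bequiv H G
| beq_trans G H K : bequiv G H -> bequiv H K -> bequiv G K
| beq_comma_assoc G H K : bequiv (BComma G (BComma H K)) (BComma (BComma G H) K)
| beq_comma_comm G H : bequiv (BComma G H) (BComma H G)
| beq_comma_unit G : bequiv (BComma G BEmpM) G
| beq_semi_assoc G H K : bequiv (BSemi G (BSemi H K)) (BSemi (BSemi G H) K)
| beq_semi_comm G H : bequiv (BSemi G H) (BSemi H G)
| beq_semi_unit G : bequiv (BSemi G BEmpA) G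
| beq_comma_cong G G' H H' : bequiv G G' -> bequiv H H' -> bequiv (BComma G H) (BComma G' H')
| beq_semi_cong G G' H H' : bequiv G G' -> bequiv H H' -> bequiv (BSemi G H) (BSemi G' H').

Inductive bctx : Type :=
| CHole : bctx
| CCommaL : bctx -> bunch -> bctx
| CCommaR : bunch -> bctx -> bctx
| CSemiL : bctx -> bunch -> bctx
| CSemiR : bunch -> bctx -> bctx.

Fixpoint fill (C : bctx) (D : bunch) : bunch :=
  match C with
  | CHole => D
  | CCommaL C' B => BComma (fill C' D) B
  | CCommaR B C' => BComma B (fill C' D)
  | CSemiL C' B => BSemi (fill C' D) B
  | CSemiR B C' => BSemi B (fill C' D)
  end.

Inductive bterm : Type :=
| TVar : nat -> bterm
| TComma : bterm -> bterm -> bterm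
| TSemi : bterm -> bterm -> bterm.

Fixpoint tvars (T : bterm) : list nat :=
  match T with
  | TVar j => [j]
  | TComma T1 T2 => tvars T1 ++ tvars T2
  | TSemi T1 T2 => tvars T1 ++ tvars T2
  end.

Definition linear (T : bterm) : Prop := NoDup (tvars T).

(* T[D_1, ..., D_n], with the substituted bunches given as a function of the index *)
Fixpoint tsubst (T : bterm) (D : nat -> bunch) : bunch :=
  match T with
  | TVar j => D j
  | TComma T1 T2 => BComma (tsubst T1 D) (tsubst T2 D)
  | TSemi T1 T2 => BSemi (tsubst T1 D) (tsubst T2 D)
  end.

(* A simple structural rule ({T_1,...,T_m}, T): premise terms and conclusion term. *)
Definition srule : Type := (list bterm * bterm)%type.

Definition simple_rule (r : srule) : Prop := linear (snd r).

(* Derivability in BI + L.  The flag [withcut] says whether the cut rule may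
   be used; [derivable false L] is the cut-free relation |-_cf. *)
Inductive derivable (withcut : bool) (L : list srule) : bunch -> formula -> Prop :=
| d_equiv G G' A : bequiv G G' -> derivable withcut L G A -> derivable withcut L G' A
| d_ax a : derivable withcut L (BForm (FAtom a)) (FAtom a)
| d_weak C D D' A : derivable withcut L (fill C D) A ->
    derivable withcut L (fill C (BSemi D D')) A
| d_contr C D A : derivable withcut L (fill C (BSemi D D)) A ->
    derivable withcut L (fill C D) A
| d_topR : derivable withcut L BEmpA FTop
| d_topL C A : derivable withcut L (fill C BEmpA) A ->
    derivable withcut L (fill C (BForm FTop)) A
| d_botL C A : derivable withcut L (fill C (BForm FBot)) A
| d_andR G H A B : derivable withcut L G A -> derivable withcut L H B ->
    derivable withcut L (BSemi G H) (FAnd A B)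
| d_andL C A B E : derivable withcut L (fill C (BSemi (BForm A) (BForm B))) E ->
    derivable withcut L (fill C (BForm (FAnd A B))) E
| d_orR1 G A B : derivable withcut L G A -> derivable withcut L G (FOr A B)
| d_orR2 G A B : derivable withcut L G B -> derivable withcut L G (FOr A B)
| d_orL C A B E : derivable withcut L (fill C (BForm A)) E ->
    derivable withcut L (fill C (BForm B)) E ->
    derivable withcut L (fill C (BForm (FOr A B))) E
| d_impR G A B : derivable withcut L (BSemi G (BForm A)) B ->
    derivable withcut L G (FImp A B)
| d_impL C D A B E : derivable withcut L D A ->
    derivable withcut L (fill C (BForm B)) E ->
    derivable withcut L (fill C (BSemi D (BForm (FImp A B)))) E
| d_empR : derivable withcut L BEmpM FEmp
| d_empL C A : derivable withcut L (fill C BEmpM) A ->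
    derivable withcut L (fill C (BForm FEmp)) A
| d_starR G H A B : derivable withcut L G A -> derivable withcut L H B ->
    derivable withcut L (BComma G H) (FStar A B)
| d_starL C A B E : derivable withcut L (fill C (BComma (BForm A) (BForm B))) E ->
    derivable withcut L (fill C (BForm (FStar A B))) E
| d_wandR G A B : derivable withcut L (BComma G (BForm A)) B ->
    derivable withcut L G (FWand A B)
| d_wandL C D A B E : derivable withcut L D A ->
    derivable withcut L (fill C (BForm B)) E ->
    derivable withcut L (fill C (BComma D (BForm (FWand A B)))) E
| d_struct (r : srule) C (D : nat -> bunch) A : In r L ->
    (forall Ti, In Ti (fst r) -> derivable withcut L (fill C (tsubst Ti D)) A) ->
    derivable withcut L (fill C (tsubst (snd r) D)) A
| d_cut C D' A B : withcut = true ->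
    derivable withcut L D' A -> derivable withcut L (fill C (BForm A)) B ->
    derivable withcut L (fill C D') B.

Definition cf (L : list srule) (G : bunch) (A : formula) : Prop := derivable false L G A.

(* Cut is eliminated one formula at a time, by induction on the cut formula A
   and then on the cut-free derivation of the left premise D |- A.  Left and
   structural rules ending that derivation commute with the cut.  If it ends
   with a right rule for A, the copies of A in the right premise are traced
   through its whole derivation at once (contraction may duplicate them): each
   copy is either carried along unchanged or, where a left rule introduces it,
   the two rules are reduced to cuts on the immediate subformulas of A.  The
   conclusion of a simple structural rule is linear, so a copy of A inside an
   instance of it lies in exactly one of the substituted bunches. *)

From Stdlib Require Import List PeanoNat.

Fixpoint ctx_comp (C1 C2 : bctx) : bctx :=
  match C1 with
  | CHole => C2
  | CCommaL C B => CCommaL (ctx_comp C C2) B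
  | CCommaR B C => CCommaR B (ctx_comp C C2)
  | CSemiL C B => CSemiL (ctx_comp C C2) B
  | CSemiR B C => CSemiR B (ctx_comp C C2)
  end.

Lemma fill_ctx_comp C1 C2 X : fill (ctx_comp C1 C2) X = fill C1 (fill C2 X).
Proof. induction C1; simpl; congruence. Qed.

Lemma bequiv_fill C X Y : bequiv X Y -> bequiv (fill C X) (fill C Y).
Proof.
  intros HXY; induction C; simpl; auto.
  all: first [apply beq_comma_cong | apply beq_semi_cong]; auto using beq_refl.
Qed.

Lemma tsubst_ext_in T f g :
  (forall j, In j (tvars T) -> f j = g j) -> tsubst T f = tsubst T g.
Proof.
  induction T; simpl; intros Hfg; [auto |..];
    rewrite IHT1, IHT2 by (intros; apply Hfg, in_or_app; auto); reflexivity.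
Qed.

Lemma NoDup_app_disjoint {X : Type} (l1 l2 : list X) x :
  NoDup (l1 ++ l2) -> In x l1 -> ~ In x l2.
Proof.
  induction l1 as [|y l1 IH]; simpl; intros Hnd Hx1 Hx2; [exact Hx1|].
  inversion Hnd as [|? ? Hy Hnd']; subst.
  destruct Hx1 as [-> | Hx1]; [apply Hy, in_or_app; auto | exact (IH Hnd' Hx1 Hx2)].
Qed.

Lemma tsubst_merge {T1 T2} (D1 D2 : nat -> bunch) :
  NoDup (tvars T1 ++ tvars T2) ->
  let D k := if in_dec Nat.eq_dec k (tvars T1) then D1 k else D2 k in
  tsubst T1 D1 = tsubst T1 D /\ tsubst T2 D2 = tsubst T2 D.
Proof.
  intros Hlin D; split; apply tsubst_ext_in; intros k Hk; unfold D;
    destruct in_dec as [Hk1 |]; auto; [contradiction |].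
  exfalso; exact (NoDup_app_disjoint _ _ _ Hlin Hk1 Hk).
Qed.

(* [repl A X G G'] : G' is G with some (not necessarily all) occurrences of A
   replaced by X. *)
Inductive repl (A : formula) (X : bunch) : bunch -> bunch -> Prop :=
| repl_hit : repl A X (BForm A) X
| repl_form f : repl A X (BForm f) (BForm f)
| repl_empM : repl A X BEmpM BEmpM
| repl_empA : repl A X BEmpA BEmpA
| repl_comma G H G' H' :
    repl A X G G' -> repl A X H H' -> repl A X (BComma G H) (BComma G' H')
| repl_semi G H G' H' :
    repl A X G G' -> repl A X H H' -> repl A X (BSemi G H) (BSemi G' H').

Inductive repl_ctx (A : formula) (X : bunch) : bctx -> bctx -> Prop :=
| repl_hole : repl_ctx A X CHole CHole
| repl_commaL C C' B B' :
    repl_ctx A X C C' -> repl A X B B' -> repl_ctx A X (CCommaL C B) (CCommaL C' B')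
| repl_commaR C C' B B' :
    repl A X B B' -> repl_ctx A X C C' -> repl_ctx A X (CCommaR B C) (CCommaR B' C')
| repl_semiL C C' B B' :
    repl_ctx A X C C' -> repl A X B B' -> repl_ctx A X (CSemiL C B) (CSemiL C' B')
| repl_semiR C C' B B' :
    repl A X B B' -> repl_ctx A X C C' -> repl_ctx A X (CSemiR B C) (CSemiR B' C').

Create HintDb repl.
#[local] Hint Constructors repl repl_ctx : repl.

Section Replacement.

Context {A : formula} {X : bunch}.

Lemma repl_refl G : repl A X G G.
Proof. induction G; auto with repl. Qed.

Lemma repl_ctx_refl C : repl_ctx A X C C.
Proof. induction C; auto using repl_refl with repl. Qed.

Lemma repl_ctx_fill C C' Z Z' :
  repl_ctx A X C C' -> repl A X Z Z' -> repl A X (fill C Z) (fill C' Z').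
Proof. induction 1; simpl; auto with repl. Qed.

Lemma repl_tsubst T D D' :
  (forall j, repl A X (D j) (D' j)) -> repl A X (tsubst T D) (tsubst T D').
Proof. intros HD; induction T; simpl; auto with repl. Qed.

Lemma repl_form_inv {f G'} :
  repl A X (BForm f) G' -> G' = BForm f \/ (f = A /\ G' = X).
Proof. inversion 1; auto. Qed.

Lemma repl_fill_inv {C Z G'} :
  repl A X (fill C Z) G' ->
  exists C' Z', repl_ctx A X C C' /\ repl A X Z Z' /\ G' = fill C' Z'.
Proof.
  revert G'; induction C as [| C IH B | B C IH | C IH B | B C IH]; simpl; intros G' HR;
    [exists CHole, G'; auto with repl |
     inversion HR as [| | | | ? ? G1 G2 H1 H2 | ? ? G1 G2 H1 H2]; subst ..].
  - destruct (IH _ H1) as (C' & Z' & ? & ? & ->); exists (CCommaL C' G2), Z'; auto with repl.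
  - destruct (IH _ H2) as (C' & Z' & ? & ? & ->); exists (CCommaR G1 C'), Z'; auto with repl.
  - destruct (IH _ H1) as (C' & Z' & ? & ? & ->); exists (CSemiL C' G2), Z'; auto with repl.
  - destruct (IH _ H2) as (C' & Z' & ? & ? & ->); exists (CSemiR G1 C'), Z'; auto with repl.
Qed.

Lemma repl_fill_form_inv {C f G'} :
  repl A X (fill C (BForm f)) G' ->
  exists C', repl_ctx A X C C' /\ (G' = fill C' (BForm f) \/ (f = A /\ G' = fill C' X)).
Proof.
  intros HR; destruct (repl_fill_inv HR) as (C' & Z' & HC & HZ & ->).
  exists C'; split; [exact HC |].
  destruct (repl_form_inv HZ) as [-> | [-> ->]]; auto.
Qed.

Lemma repl_tsubst_inv {T D G'} :
  NoDup (tvars T) -> repl A X (tsubst T D) G' ->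
  exists D', (forall j, repl A X (D j) (D' j)) /\ G' = tsubst T D'.
Proof.
  revert G'; induction T as [j | T1 IH1 T2 IH2 | T1 IH1 T2 IH2]; simpl; intros G' Hlin HR.
  2-3: inversion HR as [| | | | ? ? G1 G2 H1 H2 | ? ? G1 G2 H1 H2]; subst;
    destruct (IH1 _ (NoDup_app_remove_r _ _ Hlin) H1) as (D1 & HD1 & ->);
    destruct (IH2 _ (NoDup_app_remove_l _ _ Hlin) H2) as (D2 & HD2 & ->);
    destruct (tsubst_merge D1 D2 Hlin) as [-> ->];
    eexists; split; [| reflexivity]; intros k; cbv beta; destruct in_dec; auto.
  exists (fun k => if Nat.eq_dec k j then G' else D k); split.
  - intros k; destruct (Nat.eq_dec k j) as [-> | _]; auto using repl_refl.
  - destruct (Nat.eq_dec j j); congruence.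
Qed.

Ltac inv_repl_nodes := repeat match goal with
  | H : repl _ _ (BComma _ _) _ |- _ => inversion H; subst; clear H
  | H : repl _ _ (BSemi _ _) _ |- _ => inversion H; subst; clear H
  | H : repl _ _ BEmpM _ |- _ => inversion H; subst; clear H
  | H : repl _ _ BEmpA _ |- _ => inversion H; subst; clear H
  end.

Lemma repl_bequiv {G H} :
  bequiv G H ->
  (forall G', repl A X G G' -> exists H', repl A X H H' /\ bequiv G' H') /\
  (forall H', repl A X H H' -> exists G', repl A X G G' /\ bequiv G' H').
Proof.
  induction 1 as [G | G H _ [IH1 IH2] | G H K _ [IH1 IH2] _ [IH3 IH4] | | | | | |
    | G G' H H' _ [IH1 IH2] _ [IH3 IH4] | G G' H H' _ [IH1 IH2] _ [IH3 IH4]];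
    split; intros Y HY.
  1-2: exists Y; auto using beq_refl.
  1-2: destruct (IH1 Y HY) as (Y1 & ? & ?) || destruct (IH2 Y HY) as (Y1 & ? & ?);
    eauto using beq_sym.
  1: destruct (IH1 Y HY) as (Y1 & HY1 & ?), (IH3 Y1 HY1) as (Y2 & ? & ?).
  2: destruct (IH4 Y HY) as (Y1 & HY1 & ?), (IH2 Y1 HY1) as (Y2 & ? & ?).
  1-2: eauto using beq_trans.
  1-12: inv_repl_nodes; eexists; split;
    [| apply beq_comma_assoc + apply beq_comma_comm + apply beq_comma_unit
       + apply beq_semi_assoc + apply beq_semi_comm + apply beq_semi_unit];
    solve [auto with repl].
  all: inversion HY as [| | | | ? ? Ya Yb Ha Hb | ? ? Ya Yb Ha Hb]; subst.
  1,3: destruct (IH1 _ Ha) as (Za & ? & ?), (IH3 _ Hb) as (Zb & ? & ?).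
  3,4: destruct (IH2 _ Ha) as (Za & ? & ?), (IH4 _ Hb) as (Zb & ? & ?).
  all: eauto 6 using beq_comma_cong, beq_semi_cong with repl.
Qed.

End Replacement.

#[local] Hint Resolve repl_refl repl_ctx_refl repl_ctx_fill repl_tsubst : repl.

Section CutAdmissibility.

Variable L : list srule.

Definition cut_admissible (A : formula) : Prop :=
  forall C D B, cf L D A -> cf L (fill C (BForm A)) B -> cf L (fill C D) B.

Definition subformula_cut_admissible (A : formula) : Prop :=
  match A with
  | FAnd X Y | FOr X Y | FImp X Y | FStar X Y | FWand X Y =>
      cut_admissible X /\ cut_admissible Y
  | _ => True
  end.

Definition right_introduced (D : bunch) (A : formula) : Prop :=
  match A with
  | FAtom _ | FBot => False
  | FTop => D = BEmpA
  | FEmp => D = BEmpM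
  | FAnd X Y => exists G H, D = BSemi G H /\ cf L G X /\ cf L H Y
  | FStar X Y => exists G H, D = BComma G H /\ cf L G X /\ cf L H Y
  | FOr X Y => cf L D X \/ cf L D Y
  | FImp X Y => cf L (BSemi D (BForm X)) Y
  | FWand X Y => cf L (BComma D (BForm X)) Y
  end.

Lemma cut_admissible_comp A C1 C2 D B :
  cut_admissible A -> cf L D A ->
  cf L (fill C1 (fill C2 (BForm A))) B -> cf L (fill C1 (fill C2 D)) B.
Proof. intros Hcut HD HB; rewrite <- fill_ctx_comp in *; exact (Hcut _ _ _ HD HB). Qed.

Lemma cut_and_principal X Y C G H B :
  cut_admissible X -> cut_admissible Y -> cf L G X -> cf L H Y ->
  cf L (fill C (BSemi (BForm X) (BForm Y))) B -> cf L (fill C (BSemi G H)) B.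
Proof.
  intros HX HY HG HH HB.
  apply (cut_admissible_comp Y C (CSemiR G CHole)); [exact HY | exact HH |].
  exact (cut_admissible_comp X C (CSemiL CHole (BForm Y)) _ _ HX HG HB).
Qed.

Lemma cut_star_principal X Y C G H B :
  cut_admissible X -> cut_admissible Y -> cf L G X -> cf L H Y ->
  cf L (fill C (BComma (BForm X) (BForm Y))) B -> cf L (fill C (BComma G H)) B.
Proof.
  intros HX HY HG HH HB.
  apply (cut_admissible_comp Y C (CCommaR G CHole)); [exact HY | exact HH |].
  exact (cut_admissible_comp X C (CCommaL CHole (BForm Y)) _ _ HX HG HB).
Qed.

Lemma cut_imp_principal X Y C D E B :
  cut_admissible X -> cut_admissible Y -> cf L (BSemi D (BForm X)) Y -> cf L E X ->
  cf L (fill C (BForm Y)) B -> cf L (fill C (BSemi E D)) B.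
Proof.
  intros HX HY HD HE HB.
  apply d_equiv with (fill C (BSemi D E)); [apply bequiv_fill, beq_semi_comm |].
  exact (HY _ _ _ (HX (CSemiR D CHole) _ _ HE HD) HB).
Qed.

Lemma cut_wand_principal X Y C D E B :
  cut_admissible X -> cut_admissible Y -> cf L (BComma D (BForm X)) Y -> cf L E X ->
  cf L (fill C (BForm Y)) B -> cf L (fill C (BComma E D)) B.
Proof.
  intros HX HY HD HE HB.
  apply d_equiv with (fill C (BComma D E)); [apply bequiv_fill, beq_comma_comm |].
  exact (HY _ _ _ (HX (CCommaR D CHole) _ _ HE HD) HB).
Qed.

Hypothesis simple_L : forall r, In r L -> simple_rule r.

Lemma multicut_right_introduced {A D} :
  subformula_cut_admissible A -> right_introduced D A ->
  forall G B, cf L G B -> forall G', repl A D G G' -> cf L G' B.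
Proof.
  intros Hsub Hright G B HG; unfold cf in *.
  induction HG as [G G0 B Heq _ IH | a | C D1 D2 B _ IH | C D1 B _ IH | | C B _ IH | C B
    | G1 G2 X Y _ IH1 _ IH2 | C X Y B _ IH | G X Y _ IH | G X Y _ IH
    | C X Y B _ IH1 _ IH2 | G X Y _ IH | C D1 X Y B _ IH1 _ IH2
    | | C B _ IH | G1 G2 X Y _ IH1 _ IH2 | C X Y B _ IH | G X Y _ IH
    | C D1 X Y B _ IH1 _ IH2 | r C Ds B Hr _ IH | C D1 X Y Hc _ _ _ _];
    intros G' HR.
  - destruct (proj2 (repl_bequiv Heq) G' HR) as (G'' & HR' & Heq').
    exact (d_equiv _ _ _ _ _ Heq' (IH _ HR')).
  - destruct (repl_form_inv HR) as [-> | [<- ->]]; [apply d_ax | destruct Hright].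
  - destruct (repl_fill_inv HR) as (C' & Z & HC & HZ & ->).
    inversion HZ; subst; apply d_weak, IH; auto with repl.
  - destruct (repl_fill_inv HR) as (C' & Z & HC & HZ & ->).
    apply d_contr, IH; auto with repl.
  - inversion HR; apply d_topR.
  - destruct (repl_fill_form_inv HR) as (C' & HC & [-> | [<- ->]]).
    + apply d_topL, IH; auto with repl.
    + simpl in Hright; subst; apply IH; auto with repl.
  - destruct (repl_fill_form_inv HR) as (C' & HC & [-> | [<- ->]]);
      [apply d_botL | destruct Hright].
  - inversion HR; subst; apply d_andR; auto.
  - destruct (repl_fill_form_inv HR) as (C' & HC & [-> | [<- ->]]).
    + apply d_andL, IH; auto with repl.
    + destruct Hright as (G1 & G2 & -> & HG1 & HG2), Hsub.
      apply (cut_and_principal X Y), IH; auto with repl.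
  - apply d_orR1; auto.
  - apply d_orR2; auto.
  - destruct (repl_fill_form_inv HR) as (C' & HC & [-> | [<- ->]]).
    + apply d_orL; [apply IH1 | apply IH2]; auto with repl.
    + destruct Hsub as [HX HY], Hright as [HD | HD];
        [apply (HX _ _ _ HD), IH1 | apply (HY _ _ _ HD), IH2]; auto with repl.
  - apply d_impR, IH; auto with repl.
  - destruct (repl_fill_inv HR) as (C' & Z & HC & HZ & ->).
    inversion HZ as [| | | | | ? ? D1' F HD1 HF]; subst.
    destruct (repl_form_inv HF) as [-> | [<- ->]].
    + apply d_impL; [apply IH1 | apply IH2]; auto with repl.
    + destruct Hsub; apply (cut_imp_principal X Y); [..| apply IH1 | apply IH2]; auto with repl.
  - inversion HR; apply d_empR.
  - destruct (repl_fill_form_inv HR) as (C' & HC & [-> | [<- ->]]).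
    + apply d_empL, IH; auto with repl.
    + simpl in Hright; subst; apply IH; auto with repl.
  - inversion HR; subst; apply d_starR; auto.
  - destruct (repl_fill_form_inv HR) as (C' & HC & [-> | [<- ->]]).
    + apply d_starL, IH; auto with repl.
    + destruct Hright as (G1 & G2 & -> & HG1 & HG2), Hsub.
      apply (cut_star_principal X Y), IH; auto with repl.
  - apply d_wandR, IH; auto with repl.
  - destruct (repl_fill_inv HR) as (C' & Z & HC & HZ & ->).
    inversion HZ as [| | | | ? ? D1' F HD1 HF |]; subst.
    destruct (repl_form_inv HF) as [-> | [<- ->]].
    + apply d_wandL; [apply IH1 | apply IH2]; auto with repl.
    + destruct Hsub; apply (cut_wand_principal X Y); [..| apply IH1 | apply IH2]; auto with repl.
  - destruct (repl_fill_inv HR) as (C' & Z & HC & HZ & ->).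
    destruct (repl_tsubst_inv (simple_L r Hr) HZ) as (Ds' & HDs & ->).
    apply d_struct; [exact Hr |].
    intros Ti HTi; apply (IH Ti HTi); auto with repl.
  - discriminate Hc.
Qed.

Lemma cut_right_introduced A D C B :
  subformula_cut_admissible A -> right_introduced D A ->
  cf L (fill C (BForm A)) B -> cf L (fill C D) B.
Proof.
  intros Hsub Hright HB.
  apply (multicut_right_introduced Hsub Hright _ _ HB); auto with repl.
Qed.

Lemma cut_admissible_of_subformulas A : subformula_cut_admissible A -> cut_admissible A.
Proof.
  intros Hsub C D B HD; revert Hsub C B; unfold cf in *.
  induction HD as [G G' A Heq _ IH | a | C D1 D2 A _ IH | C D1 A _ IH | | C A _ IH | C A
    | G1 G2 X Y HG1 _ HG2 _ | C X Y A _ IH | G X Y HG _ | G X Y HG _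
    | C X Y A _ IH1 _ IH2 | G X Y HG _ | C D1 X Y A HD1 _ _ IH2
    | | C A _ IH | G1 G2 X Y HG1 _ HG2 _ | C X Y A _ IH | G X Y HG _
    | C D1 X Y A HD1 _ _ IH2 | r C Ds A Hr _ IH | C D1 X Y Hc _ _ _ _];
    intros Hsub C0 B HB.
  - apply d_equiv with (fill C0 G); [apply bequiv_fill, Heq | auto].
  - exact HB.
  - rewrite <- fill_ctx_comp; apply d_weak; rewrite fill_ctx_comp; auto.
  - rewrite <- fill_ctx_comp; apply d_contr; rewrite fill_ctx_comp; auto.
  - apply (cut_right_introduced FTop); simpl; auto.
  - rewrite <- fill_ctx_comp; apply d_topL; rewrite fill_ctx_comp; auto.
  - rewrite <- fill_ctx_comp; apply d_botL.
  - apply (cut_right_introduced (FAnd X Y)); simpl; eauto.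
  - rewrite <- fill_ctx_comp; apply d_andL; rewrite fill_ctx_comp; auto.
  - apply (cut_right_introduced (FOr X Y)); simpl; auto.
  - apply (cut_right_introduced (FOr X Y)); simpl; auto.
  - rewrite <- fill_ctx_comp; apply d_orL; rewrite fill_ctx_comp; auto.
  - apply (cut_right_introduced (FImp X Y)); simpl; auto.
  - rewrite <- fill_ctx_comp; apply d_impL; [exact HD1 | rewrite fill_ctx_comp; auto].
  - apply (cut_right_introduced FEmp); simpl; auto.
  - rewrite <- fill_ctx_comp; apply d_empL; rewrite fill_ctx_comp; auto.
  - apply (cut_right_introduced (FStar X Y)); simpl; eauto.
  - rewrite <- fill_ctx_comp; apply d_starL; rewrite fill_ctx_comp; auto.
  - apply (cut_right_introduced (FWand X Y)); simpl; auto.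
  - rewrite <- fill_ctx_comp; apply d_wandL; [exact HD1 | rewrite fill_ctx_comp; auto].
  - rewrite <- fill_ctx_comp; apply d_struct; [exact Hr |].
    intros Ti HTi; rewrite fill_ctx_comp; auto.
  - discriminate Hc.
Qed.

End CutAdmissibility.

Theorem theorem7p5 (L : list srule) :
  (forall r, In r L -> simple_rule r) ->
  forall (C : bctx) (D' : bunch) (A B : formula),
    cf L D' A -> cf L (fill C (BForm A)) B -> cf L (fill C D') B.
Proof.
  intros simple_L C D' A; revert C D'.
  induction A; apply cut_admissible_of_subformulas; simpl; auto.
Qed.
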